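(* Let $\epsilon>0$, $\delta>0$, and let $\rho$ be a pure $n$-qubit state. Then $N=O(n\log(1/\delta)/\epsilon^2)$ pairs of copies $\rho\otimes\rho$ suffice to produce, with probability $1-\delta$, estimates $\pi_\rho(x_{1:k})$ such that $|\pi_\rho(x_{1:k})-p_\rho(x_{1:k})|\le\epsilon/2^k$ simultaneously for all $x\in\{0,1\}^{2n}$ and all $1\le k\le n$.
   Context: Pauli strings are labelled by $x=(x_1,\dots,x_n)$ with $x_i=(v_i,w_i)\in\{0,1\}^2$, via $P_x=i^{v\cdot w}(X^{v_1}Z^{w_1})\otimes\cdots\otimes(X^{v_n}Z^{w_n})$. The Pauli distribution of a pure state is $p_\rho(x)=\mathrm{tr}(\rho P_x)^2/2^n$ on $\{0,1\}^{2n}$, and $p_\rho(x_{1:k})=\sum_{x_{k+1},\dots,x_n}p_\rho(x)$ is the marginal on the first $k$ qubit labels $x_1,\dots,x_k$ (each $x_i$ a pair of bits). *)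

From HB Require Import structures.
From mathcomp Require Import all_boot all_order all_algebra.
From mathcomp Require Import reals exp complex.
Set Implicit Arguments. Unset Strict Implicit. Unset Printing Implicit Defensive.
Import Order.TTheory GRing.Theory Num.Theory.
Local Open Scope ring_scope.
Local Open Scope complex_scope.

Definition qbasis (n : nat) := {ffun 'I_n -> bool}.
Definition plabel (n : nat) := {ffun 'I_n -> bool * bool}.

Section Quantum.
Variable R : realType.
Local Notation C := R[i].

(* single qubit matrix entry  <a| X^v Z^w |b> = [a = b xor v] (-1)^(w b) *)
Definition pauli1 (v w a b : bool) : C :=
  if a == addb b v then (if w && b then -1 else 1) else 0.

(* <a| P_x |b>, P_x = i^(v.w) (X^v1 Z^w1) (x) ... (x) (X^vn Z^wn) *)
Definition pauli_entry (n : nat) (x : plabel n) (a b : qbasis n) : C :=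
  'i ^+ (\sum_(i < n) nat_of_bool ((x i).1 && (x i).2))%N
  * \prod_(i < n) pauli1 (x i).1 (x i).2 (a i) (b i).

Definition is_pure_state (n : nat) (psi : qbasis n -> C) : Prop :=
  \sum_(b : qbasis n) (psi b)^* * psi b = 1.

(* tr(rho P_x) = <psi| P_x |psi> for rho = |psi><psi| *)
Definition pauli_expect (n : nat) (psi : qbasis n -> C) (x : plabel n) : C :=
  \sum_(a : qbasis n) \sum_(b : qbasis n) (psi a)^* * pauli_entry x a b * psi b.

Definition pauli_dist (n : nat) (psi : qbasis n -> C) (x : plabel n) : R :=
  complex.Re ((pauli_expect psi x) ^+ 2) / 2 ^+ n.

Definition pauli_prefix (n : nat) (k : 'I_n.+1) (x : plabel n) : {ffun 'I_k -> bool * bool} :=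
  [ffun i : 'I_k => x (widen_ord (ltnSE (ltn_ord k)) i)].

Definition pauli_marginal (n : nat) (psi : qbasis n -> C) (k : 'I_n.+1)
  (x : plabel n) : R :=
  \sum_(y : plabel n | pauli_prefix k y == pauli_prefix k x) pauli_dist psi y.

(* Basis of the Hilbert space of N pairs of copies, (rho (x) rho)^{(x) N} *)
Definition pairs_basis (n N : nat) := {ffun 'I_N -> qbasis n * qbasis n}.

Definition pairs_state (n N : nat) (psi : qbasis n -> C) (f : pairs_basis n N) : C :=
  \prod_(j < N) (psi (f j).1 * psi (f j).2).

Definition is_povm (I O : finType) (M : O -> I -> I -> C) : Prop :=
  (forall (o : O) (v : I -> C),
      0 <= \sum_(i : I) \sum_(j : I) (v i)^* * M o i j * v j)
  /\ (forall i j : I, \sum_(o : O) M o i j = (i == j)%:R).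

Definition povm_prob (I O : finType) (M : O -> I -> I -> C) (Psi : I -> C) (o : O) : C :=
  \sum_(i : I) \sum_(j : I) (Psi i)^* * M o i j * Psi j.

End Quantum.

From HB Require Import structures.
From mathcomp Require Import all_boot all_order all_algebra.
From mathcomp Require Import reals exp complex sequences.
From mathcomp Require Import ring lra zify.
Set Implicit Arguments. Unset Strict Implicit. Unset Printing Implicit Defensive.
Import Order.TTheory GRing.Theory Num.Theory.
Local Open Scope ring_scope.
Local Open Scope complex_scope.

(* Measure each pair rho (x) rho in the Bell basis {Phi_y}.  As P_x (x) P_x is
   diagonal in that basis with eigenvalues +-1, the outcome distribution
   q(y) = 2^-n |<Phi_y|psi (x) psi>|^2 satisfies tr(rho P_x)^2 = sum_y q(y) s(y, x)
   for signs s(y, x), so every marginal p_rho(x_{1:k}) is the mean under q of a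
   score bounded by 2^-k.  Estimating it by the sample mean over N i.i.d. Bell
   outcomes, Hoeffding's inequality and a union bound over the 4^n (n + 1) pairs
   (x, k) bound the failure probability by 2 4^n (n + 1) exp(-N eps^2 / 32),
   which is at most delta once N >= 160 n ln(1/delta) / eps^2.  For eps >= 2 the
   estimate 0 is already good enough, with N = 0. *)

Lemma prodr_natb (S : comPzRingType) (I : finType) (P : pred I) :
  \prod_i ((P i)%:R : S) = [forall i, P i]%:R.
Proof.
case: (boolP [forall i, P i]) => [/forallP allP | /forallPn [i /negbTE Pi]].
  by rewrite big1 // => i _; rewrite allP.
by rewrite (bigD1 i) //= Pi mul0r.
Qed.

Lemma prodr_nat_eq (S : comPzRingType) (I : finType) (T : eqType)
    (f g : {ffun I -> T}) :
  \prod_i ((f i == g i)%:R : S) = (f == g)%:R.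
Proof.
rewrite prodr_natb; congr (nat_of_bool _)%:R.
by apply/forallP/eqP => [fg | -> //]; apply/ffunP => i; apply/eqP.
Qed.

Lemma sum_pair_bool (V : nmodType) (G : bool * bool -> V) :
  \sum_t G t = G (true, true) + G (true, false) + (G (false, true) + G (false, false)).
Proof.
transitivity (\sum_(t : bool * bool) G (t.1, t.2)); first by apply: eq_bigr => -[].
by rewrite -(pair_bigA _ (fun u v => G (u, v))) /= !big_bool.
Qed.

Lemma prod_ord_if_ltn (S : pzSemiRingType) (x : S) (n k : nat) : (k <= n)%N ->
  \prod_(i < n) (if (i < k)%N then 1 else x) = x ^+ (n - k).
Proof.
move=> k_le; rewrite -(big_mkord xpredT (fun i => if (i < k)%N then 1 else x)).
rewrite (big_cat_nat (leq0n k) k_le) /= big_nat_cond big1 ?mul1r => [|i /andP[/andP[_ ->]]] //.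
rewrite -(prodr_const_nat k n x) big_nat_cond [RHS]big_nat_cond.
by apply: eq_bigr => i /andP[/andP[k_le_i _] _]; rewrite ltnNge k_le_i.
Qed.

Lemma union_bound (R : numDomainType) (T E : finType) (w : T -> R)
    (bad : pred T) (B : E -> pred T) :
  (forall t, 0 <= w t) -> (forall t, bad t -> exists e, B e t) ->
  \sum_(t | bad t) w t <= \sum_e \sum_(t | B e t) w t.
Proof.
move=> w_ge0 badB.
rewrite [leRHS](exchange_big_dep xpredT) //= big_mkcond /=.
apply: ler_sum => t _; case: ifP => [/badB [e Bet] | _]; last exact: sumr_ge0.
by rewrite (bigD1 e) //= lerDl sumr_ge0.
Qed.

Lemma sum_pred_ge_compl (R : numDomainType) (T : finType) (w : T -> R) (P : pred T) d :
  \sum_t w t = 1 -> \sum_(t | ~~ P t) w t <= d -> 1 - d <= \sum_(t | P t) w t.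
Proof. by rewrite (bigID P) /= => <- nP_le; rewrite -addrA gerDl subr_le0. Qed.

Lemma expR_le_quadratic (R : realType) (x : R) :
  x <= 1 / 2 -> expR x <= 1 + x + 2 * x ^+ 2.
Proof.
move=> x_le.
have x_lt1 : 0 < 1 - x by lra.
rewrite -(ler_pM2r x_lt1).
have : expR x * (1 - x) <= expR x * expR (- x).
  by rewrite ler_pM2l ?expR_gt0 // expR_ge1Dx.
rewrite -expRD subrr expR0 => /le_trans; apply.
have -> : (1 + x + 2 * x ^+ 2) * (1 - x) = 1 + x ^+ 2 * (1 - 2 * x) by ring.
by rewrite lerDl mulr_ge0 ?sqr_ge0 //; lra.
Qed.

Section IIDSample.
Variables (R : realType) (Y : finType) (q : Y -> R).
Hypothesis q_ge0 : forall y, 0 <= q y.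
Hypothesis q_sum1 : \sum_y q y = 1.

Definition expect (X : Y -> R) : R := \sum_y q y * X y.

Lemma expect_norm_le X c : (forall y, `|X y| <= c) -> `|expect X| <= c.
Proof.
move=> X_le; apply: le_trans (ler_norm_sum _ _ _) _.
rewrite -[leRHS]mul1r -q_sum1 mulr_suml; apply: ler_sum => y _.
by rewrite normrM ger0_norm // ler_wpM2l.
Qed.

Lemma expect_expR_le Z lam : (forall y, `|Z y| <= 1) -> expect Z = 0 ->
  0 <= lam <= 1 / 2 -> expect (fun y => expR (lam * Z y)) <= expR (2 * lam ^+ 2).
Proof.
move=> Z_le Z_mean /andP[lam_ge0 lam_le].
apply: (@le_trans _ _ (expect (fun y => 1 + lam * Z y + 2 * lam ^+ 2))).
  apply: ler_sum => y _; apply: ler_wpM2l => //.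
  have /andP[_ Zy_le1] : -1 <= Z y <= 1 by rewrite -ler_norml.
  have Zy2_le1 : Z y ^+ 2 <= 1.
    by rewrite -[Z y ^+ 2]ger0_norm ?sqr_ge0 // normrX exprn_ile1.
  apply: le_trans (expR_le_quadratic _) _.
    by apply: le_trans lam_le; rewrite -[leRHS]mulr1 ler_wpM2l.
  by rewrite lerD2l ler_wpM2l // exprMn -[leRHS]mulr1 ler_wpM2l ?sqr_ge0.
rewrite /expect in Z_mean *.
rewrite (eq_bigr (fun y => q y + lam * (q y * Z y) + 2 * lam ^+ 2 * q y)) => [|y _]; last by ring.
rewrite !big_split /= -mulr_sumr -mulr_sumr Z_mean q_sum1 mulr0 mulr1 addr0.
exact: expR_ge1Dx.
Qed.

Variable N : nat.

Definition iid_prob (o : {ffun 'I_N -> Y}) : R := \prod_j q (o j).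

(* For N = 0 this is 0, since 0^-1 = 0. *)
Definition sample_mean (X : Y -> R) (o : {ffun 'I_N -> Y}) : R :=
  N%:R^-1 * \sum_j X (o j).

Lemma iid_prob_ge0 o : 0 <= iid_prob o.
Proof. exact: prodr_ge0. Qed.

Lemma sum_iid_prob_prod F :
  \sum_o iid_prob o * \prod_j F (o j) = expect F ^+ N.
Proof.
have -> : expect F ^+ N = \prod_(j < N) expect F by rewrite prodr_const card_ord.
rewrite /expect bigA_distr_bigA /=.
by apply: eq_bigr => o _; rewrite -big_split.
Qed.

Lemma sum_iid_prob : \sum_o iid_prob o = 1.
Proof.
have expect1 : expect (fun=> 1) = 1.
  by rewrite /expect -[RHS]q_sum1; apply: eq_bigr => y _; exact: mulr1.
transitivity (expect (fun=> 1) ^+ N); last by rewrite expect1 expr1n.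
by rewrite -sum_iid_prob_prod; apply: eq_bigr => o _; rewrite big1_eq mulr1.
Qed.

Lemma sample_mean_norm_le X c o :
  0 <= c -> (forall y, `|X y| <= c) -> `|sample_mean X o| <= c.
Proof.
move=> c_ge0 X_le; rewrite /sample_mean normrM.
have [-> | N_neq0] := eqVneq (N%:R : R) 0; first by rewrite invr0 normr0 mul0r.
have N_gt0 : (0 : R) < N%:R by rewrite lt_def N_neq0 ler0n.
rewrite normfV normr_nat ler_pdivrMl //.
apply: le_trans (ler_norm_sum _ _ _) _.
have -> : N%:R * c = \sum_(j < N) c by rewrite sumr_const card_ord mulr_natl.
exact: ler_sum.
Qed.

Lemma sample_mean_dev_le X c o : 0 <= c -> (forall y, `|X y| <= c) ->
  `|sample_mean X o - expect X| <= 2 * c.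
Proof.
move=> c_ge0 X_le; apply: le_trans (ler_normB _ _) _.
by rewrite mulr2n mulrDl mul1r lerD ?sample_mean_norm_le ?expect_norm_le.
Qed.

Lemma chernoff_sum_ge Z a : (forall y, `|Z y| <= 1) -> expect Z = 0 -> 0 <= a <= 2 ->
  \sum_(o : {ffun 'I_N -> Y} | N%:R * a <= \sum_j Z (o j)) iid_prob o
    <= expR (- (N%:R * a ^+ 2 / 8)).
Proof.
move=> Z_le Z_mean /andP[a_ge0 a_le2].
(* [lam] minimises [- lam a + 2 lam ^+ 2], the exponent left by Markov's inequality. *)
pose lam := a / 4.
have lam_ge0 : 0 <= lam by rewrite divr_ge0.
apply: (@le_trans _ _ (\sum_o iid_prob o * expR (lam * (\sum_j Z (o j) - N%:R * a)))).
  rewrite big_mkcond; apply: ler_sum => o _.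
  case: ifP => [bad_o | _]; last by rewrite mulr_ge0 ?iid_prob_ge0 ?expR_ge0.
  rewrite -[leLHS]mulr1 ler_wpM2l ?iid_prob_ge0 //.
  by rewrite -[leLHS](expR0 R) ler_expR mulr_ge0 ?subr_ge0.
have -> : \sum_o iid_prob o * expR (lam * (\sum_j Z (o j) - N%:R * a)) =
    expR (- (lam * (N%:R * a))) * expect (fun y => expR (lam * Z y)) ^+ N.
  rewrite -sum_iid_prob_prod mulr_sumr; apply: eq_bigr => o _.
  by rewrite mulrBr expRD mulr_sumr expR_sum mulrA mulrC.
apply: (@le_trans _ _ (expR (- (lam * (N%:R * a))) * expR (2 * lam ^+ 2) ^+ N)).
  rewrite ler_wpM2l ?expR_ge0 // lerXn2r ?nnegrE ?expR_ge0 ?sumr_ge0 //.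
    by move=> y _; rewrite mulr_ge0 ?expR_ge0.
  by apply: expect_expR_le => //; rewrite lam_ge0 /lam; lra.
rewrite -expRM_natl -expRD ler_expR.
by rewrite (_ : _ + _ = - (N%:R * a ^+ 2 / 8)) // /lam; field.
Qed.

Lemma chernoff_norm_sum_gt Z a : (forall y, `|Z y| <= 1) -> expect Z = 0 -> 0 <= a <= 2 ->
  \sum_(o : {ffun 'I_N -> Y} | N%:R * a < `|\sum_j Z (o j)|) iid_prob o
    <= 2 * expR (- (N%:R * a ^+ 2 / 8)).
Proof.
move=> Z_le Z_mean a_range.
have NZ_le y : `|- Z y| <= 1 by rewrite normrN.
have NZ_mean : expect (fun y => - Z y) = 0.
  by rewrite -oppr0 -Z_mean /expect -sumrN; apply: eq_bigr => y _; rewrite mulrN.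
pose B (b : bool) (o : {ffun 'I_N -> Y}) :=
  N%:R * a <= \sum_j (if b then Z (o j) else - Z (o j)).
apply: le_trans (union_bound (B := B) iid_prob_ge0 _) _.
  move=> o; rewrite ltr_normr => /orP[/ltW Z_big | /ltW NZ_big].
    by exists true.
  by exists false; rewrite /B sumrN.
rewrite big_bool /= mulr_natl mulr2n.
by apply: lerD; [exact: chernoff_sum_ge Z_le Z_mean a_range
                | exact: chernoff_sum_ge NZ_le NZ_mean a_range].
Qed.

Lemma hoeffding_sample_mean X c eps :
  0 < c -> (forall y, `|X y| <= c) -> 0 < eps <= 2 -> (0 < N)%N ->
  \sum_(o : {ffun 'I_N -> Y} | eps * c < `|sample_mean X o - expect X|) iid_prob o
    <= 2 * expR (- (N%:R * eps ^+ 2 / 32)).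
Proof.
move=> c_gt0 X_le /andP[eps_gt0 eps_le2] N_gt0.
have N_gt0R : (0 : R) < N%:R by rewrite ltr0n.
have c2_gt0 : 0 < 2 * c by rewrite mulr_gt0.
pose Z y := (X y - expect X) / (2 * c).
have Z_le y : `|Z y| <= 1.
  rewrite normrM normfV (gtr0_norm c2_gt0) ler_pdivrMr // mul1r mulr_natl mulr2n.
  by apply: le_trans (ler_normB _ _) _; rewrite lerD ?expect_norm_le.
have Z_mean : expect Z = 0.
  rewrite /expect /Z; under eq_bigr do rewrite mulrA mulrBr.
  by rewrite -mulr_suml sumrB -mulr_suml q_sum1 mul1r subrr mul0r.
have dev_Z o : sample_mean X o - expect X = 2 * c / N%:R * \sum_j Z (o j).
  rewrite /Z -mulr_suml sumrB sumr_const card_ord /sample_mean.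
  by field; rewrite ?pnatr_eq0 -?lt0n ?N_gt0 ?(gt_eqF c_gt0).
have scale_gt0 : 0 < 2 * c / N%:R by rewrite divr_gt0.
rewrite (eq_bigl (fun o : {ffun 'I_N -> Y} => N%:R * (eps / 2) < `|\sum_j Z (o j)|)) => [|o].
  rewrite (_ : N%:R * eps ^+ 2 / 32 = N%:R * (eps / 2) ^+ 2 / 8); last by field.
  by apply: chernoff_norm_sum_gt => //; lra.
rewrite dev_Z normrM gtr0_norm // -[RHS](ltr_pM2l scale_gt0).
by rewrite (_ : 2 * c / N%:R * (N%:R * (eps / 2)) = eps * c) //; field; rewrite gt_eqF.
Qed.

End IIDSample.

Definition sqnormc (R : realType) (z : R[i]) : R := complex.Re z ^+ 2 + complex.Im z ^+ 2.

Lemma sqnormc_ge0 (R : realType) (z : R[i]) : 0 <= sqnormc z.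
Proof. by rewrite addr_ge0 ?sqr_ge0. Qed.

Lemma mulJc (R : realType) (z : R[i]) : z^* * z = (sqnormc z)%:C.
Proof. by rewrite add_Re2_Im2 sqr_normc mulrC. Qed.

Lemma sqnormc_prod (R : realType) (I : finType) (z : I -> R[i]) :
  sqnormc (\prod_i z i) = \prod_i sqnormc (z i).
Proof.
apply: (@complexI R); rewrite -mulJc rmorph_prod rmorph_prod -big_split /=.
by apply: eq_bigr => i _; rewrite mulJc.
Qed.

Section QuadraticForm.
Variables (R : realType) (I : finType).

(* In [complex_scope], [^*] is [conjc]; [%R] selects [Num.conj], the conjugation
   used by the definitions and produced by [mulJc]. *)
Lemma conjc_sum_realM (f : I -> R) (v : I -> R[i]) :
  ((\sum_i (f i)%:C * v i)^*)%R = \sum_i (f i)%:C * (v i)^*.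
Proof.
by rewrite rmorph_sum; apply: eq_bigr => i _; rewrite rmorphM /=; congr (_ * _); exact: conjc_real.
Qed.

Lemma quad_form_rank1 (w : R) (f : I -> R) (v : I -> R[i]) :
  \sum_i \sum_j (v i)^* * (w * f i * f j)%:C * v j
    = (w * sqnormc (\sum_i (f i)%:C * v i))%:C.
Proof.
set S := \sum_i (f i)%:C * v i.
have -> : (w * sqnormc S)%:C = w%:C * (S^* * S) by rewrite mulJc rmorphM.
rewrite /S conjc_sum_realM big_distrlr mulr_sumr; apply: eq_bigr => i _.
by rewrite mulr_sumr; apply: eq_bigr => j _; rewrite !rmorphM /=; ring.
Qed.

Lemma quad_form_sum_rank1 (K : finType) (w : K -> R) (f : K -> I -> R) (v : I -> R[i]) :
  \sum_i \sum_j (v i)^* * (\sum_k w k * f k i * f k j)%:C * v j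
    = \sum_k (w k * sqnormc (\sum_i (f k i)%:C * v i))%:C.
Proof.
under eq_bigr do under eq_bigr do rewrite rmorph_sum mulr_sumr mulr_suml.
under eq_bigr do rewrite exchange_big /=.
rewrite exchange_big /=; apply: eq_bigr => k _; exact: quad_form_rank1.
Qed.

End QuadraticForm.

Section BellSampling.
Variable R : realType.
Local Notation C := R[i].

(* [bell1 (v, w)] is the unnormalised Bell vector (Z^w (x) X^v)(|00> + |11>). *)
Definition bell1 (t : bool * bool) (a b : bool) : R :=
  if b == a (+) t.1 then (if t.2 && a then -1 else 1) else 0.

Definition bell_sign1 (t x : bool * bool) : R :=
  (-1) ^+ ((x.1 && x.2) + (x.1 && t.2) + (x.2 && t.1))%N.

Definition pauli1r (v w a b : bool) : R :=
  if a == b (+) v then (if w && b then -1 else 1) else 0.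

Lemma pauli1E v w a b : pauli1 R v w a b = (pauli1r v w a b)%:C.
Proof.
by rewrite /pauli1 /pauli1r; case: (a == _); case: (w && b); rewrite ?rmorphN1 ?rmorph1 ?rmorph0.
Qed.

Lemma sum_bell1_mul a a' b b' :
  \sum_t bell1 t a a' * bell1 t b b' = 2 * ((a == b) && (a' == b'))%:R.
Proof. by rewrite sum_pair_bool; case: a a' b b' => [] [] [] []; rewrite /bell1 /=; ring. Qed.

(* One-qubit case of P_x (x) P_x = 2^-n sum_y bell_sign y x |Phi_y><Phi_y|; the
   factor (-1)^(v w) is the square of the phase i^(v w) of P_x. *)
Lemma pauli1r_mul_bell1 v w a b a' b' :
  (-1) ^+ (v && w) * (pauli1r v w a b * pauli1r v w a' b') =
  \sum_t 2^-1 * bell_sign1 t (v, w) * bell1 t a a' * bell1 t b b'.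
Proof.
rewrite sum_pair_bool.
by case: v w a b a' b' => [] [] [] [] [] []; rewrite /pauli1r /bell_sign1 /bell1 /=; field.
Qed.

Variable n : nat.

Definition bell (y : plabel n) (ab : qbasis n * qbasis n) : R :=
  \prod_i bell1 (y i) (ab.1 i) (ab.2 i).

Definition bell_sign (y x : plabel n) : R := \prod_i bell_sign1 (y i) (x i).

Lemma pauli_entry_mul x (ab cd : qbasis n * qbasis n) :
  pauli_entry R x ab.1 cd.1 * pauli_entry R x ab.2 cd.2 =
  (\sum_y (2 ^+ n)^-1 * bell_sign y x * bell y ab * bell y cd)%:C.
Proof.
have qubit i : (-1 : C) ^+ ((x i).1 && (x i).2) *
    (pauli1 R (x i).1 (x i).2 (ab.1 i) (cd.1 i) * pauli1 R (x i).1 (x i).2 (ab.2 i) (cd.2 i)) =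
    (\sum_t 2^-1 * bell_sign1 t (x i) * bell1 t (ab.1 i) (ab.2 i) * bell1 t (cd.1 i) (cd.2 i))%:C.
  case: (x i) => v w /=.
  by rewrite -pauli1r_mul_bell1 !pauli1E rmorphM rmorphXn rmorphN1 rmorphM.
rewrite /pauli_entry mulrACA -exprMn -expr2 sqr_i -prodrXr -!big_split /=.
rewrite (eq_bigr _ (fun i _ => qubit i)) -rmorph_prod bigA_distr_bigA /=; congr _%:C.
apply: eq_bigr => y _.
have -> : (2 ^+ n)^-1 = \prod_(i < n) (2^-1 : R) by rewrite prodr_const card_ord exprVn.
by rewrite /bell_sign /bell -!big_split.
Qed.

Lemma sum_bell_mul (ab cd : qbasis n * qbasis n) :
  \sum_y bell y ab * bell y cd = 2 ^+ n * (ab == cd)%:R.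
Proof.
case: ab cd => a a' [b b']; rewrite /bell /=.
under eq_bigr do rewrite -big_split /=.
rewrite -(bigA_distr_bigA (fun i t => bell1 t (a i) (a' i) * bell1 t (b i) (b' i))) /=.
under eq_bigr do rewrite sum_bell1_mul.
rewrite big_split /= prodr_const card_ord xpair_eqE -mulnb natrM -!prodr_nat_eq -big_split /=.
by congr (_ * _); apply: eq_bigr => i _; rewrite -mulnb natrM.
Qed.


Definition bell_amp (psi : qbasis n -> C) (y : plabel n) : C :=
  \sum_(ab : qbasis n * qbasis n) (bell y ab)%:C * (psi ab.1 * psi ab.2).

Definition bell_prob (psi : qbasis n -> C) (y : plabel n) : R :=
  (2 ^+ n)^-1 * sqnormc (bell_amp psi y).

Lemma bell_prob_ge0 psi y : 0 <= bell_prob psi y.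
Proof. by rewrite mulr_ge0 ?sqnormc_ge0 // invr_ge0 exprn_ge0. Qed.

Lemma pauli_expect_sqr psi x :
  pauli_expect psi x ^+ 2 = (\sum_y bell_prob psi y * bell_sign y x)%:C.
Proof.
have -> : pauli_expect psi x ^+ 2 =
    \sum_(ab : qbasis n * qbasis n) \sum_(cd : qbasis n * qbasis n)
      (psi ab.1 * psi ab.2)^* * (pauli_entry R x ab.1 cd.1 * pauli_entry R x ab.2 cd.2)
      * (psi cd.1 * psi cd.2).
  rewrite expr2 /pauli_expect big_distrlr pair_bigA; apply: eq_bigr => -[a a'] _ /=.
  rewrite big_distrlr pair_bigA; apply: eq_bigr => -[b b'] _ /=.
  by rewrite rmorphM /=; ring.
under eq_bigr do under eq_bigr do rewrite pauli_entry_mul.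
rewrite quad_form_sum_rank1 [RHS]rmorph_sum; apply: eq_bigr => y _.
by rewrite /bell_prob mulrAC.
Qed.

Definition pauli_id : plabel n := [ffun => (false, false)].

Lemma pauli_entry_id (a b : qbasis n) : pauli_entry R pauli_id a b = (a == b)%:R.
Proof.
rewrite /pauli_entry big1 ?expr0 ?mul1r => [|i _]; last by rewrite ffunE.
by rewrite -prodr_nat_eq; apply: eq_bigr => i _; rewrite ffunE /pauli1 /= addbF; case: eqP.
Qed.

Lemma sum_bell_prob psi : is_pure_state psi -> \sum_y bell_prob psi y = 1.
Proof.
move=> psi_pure.
have expect_id : pauli_expect psi pauli_id = 1.
  rewrite -psi_pure; apply: eq_bigr => a _.
  rewrite (bigD1 a) //= pauli_entry_id eqxx mulr1 big1 ?addr0 // => b b_neq.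
  by rewrite pauli_entry_id eq_sym (negbTE b_neq) mulr0 mul0r.
have sign_id y : bell_sign y pauli_id = 1.
  by rewrite /bell_sign big1 // => i _; rewrite ffunE /bell_sign1 /= expr0.
apply: (@complexI R); rewrite rmorph1 -[RHS](expr1n _ 2) -expect_id pauli_expect_sqr.
by congr _%:C; apply: eq_bigr => y _; rewrite sign_id mulr1.
Qed.

Definition marginal_score (k : 'I_n.+1) (z : {ffun 'I_k -> bool * bool}) (y : plabel n) : R :=
  (2 ^+ n)^-1 * \sum_(x | pauli_prefix k x == z) bell_sign y x.

Lemma pauli_marginal_expect psi k x :
  pauli_marginal psi k x = expect (bell_prob psi) (marginal_score (pauli_prefix k x)).
Proof.
rewrite /pauli_marginal /pauli_dist /expect /marginal_score.
under eq_bigr do rewrite pauli_expect_sqr /=.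
under [RHS]eq_bigr do rewrite mulr_sumr mulr_sumr.
rewrite [RHS]exchange_big /=; apply: eq_bigr => x' _.
by rewrite mulr_suml; apply: eq_bigr => y _; rewrite mulrCA mulrC.
Qed.

Definition prefix_ext (k : 'I_n.+1) (z : {ffun 'I_k -> bool * bool}) (i : 'I_n) : bool * bool :=
  if insub (val i) is Some j then z j else (false, false).

Lemma pauli_prefix_eqE (k : 'I_n.+1) z x :
  (pauli_prefix k x == z) = [forall i : 'I_n, (i < k)%N ==> (x i == prefix_ext z i)].
Proof.
apply/eqP/forallP => [<- i | x_eq].
  apply/implyP => i_lt; rewrite /prefix_ext; case: insubP => [j _ j_eq | ]; last by rewrite i_lt.
  by rewrite ffunE; apply/eqP; congr (x _); apply: val_inj.
apply/ffunP => j; rewrite ffunE.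
have := x_eq (widen_ord (ltnSE (ltn_ord k)) j); rewrite /= ltn_ord /= /prefix_ext.
case: insubP => [j' _ j'_eq | ]; last by rewrite /= ltn_ord.
by move/eqP => ->; congr (z _); apply: val_inj.
Qed.

Lemma norm_sum_bell_sign1 t : `|\sum_p bell_sign1 t p| = 2.
Proof.
rewrite sum_pair_bool; case: t => -[] [] /=; rewrite /bell_sign1 /=.
- by rewrite (_ : _ + _ = -2 :> R) ?normrN ?normr_nat //; ring.
- by rewrite (_ : _ + _ = 2 :> R) ?normr_nat //; ring.
- by rewrite (_ : _ + _ = 2 :> R) ?normr_nat //; ring.
- by rewrite (_ : _ + _ = 2 :> R) ?normr_nat //; ring.
Qed.

Lemma marginal_score_bound (k : 'I_n.+1) (z : {ffun 'I_k -> bool * bool}) y :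
  `|marginal_score z y| <= (2 ^+ k)^-1.
Proof.
pose Q (i : 'I_n) (p : bool * bool) := (i < k)%N ==> (p == prefix_ext z i).
rewrite /marginal_score.
have -> : \sum_(x | pauli_prefix k x == z) bell_sign y x
    = \prod_i \sum_(p | Q i p) bell_sign1 (y i) p.
  rewrite bigA_distr_big_dep; apply: eq_bigl => x.
  by rewrite pauli_prefix_eqE; apply/forallP/familyP => x_in i; apply: x_in.
rewrite normrM normr_prod ger0_norm ?invr_ge0 ?exprn_ge0 //.
apply: (@le_trans _ _ ((2 ^+ n)^-1 * \prod_(i < n) (if (i < k)%N then 1 else 2))).
  rewrite ler_wpM2l ?invr_ge0 ?exprn_ge0 //; apply: ler_prod => i _.
  rewrite normr_ge0 /Q; case: ifP => _ /=; last by rewrite norm_sum_bell_sign1.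
  by rewrite big_pred1_eq /bell_sign1 normrX normrN normr1 expr1n.
have k_le : (k <= n)%N := ltnSE (ltn_ord k).
have -> : 2 ^+ n = 2 ^+ k * 2 ^+ (n - k) :> R by rewrite -exprD subnKC.
by rewrite prod_ord_if_ltn // invfM -mulrA mulVf ?mulr1 // expf_neq0 // pnatr_eq0.
Qed.

Variable N : nat.

Definition bell_seq (o : {ffun 'I_N -> plabel n}) (f : pairs_basis n N) : R :=
  \prod_j bell (o j) (f j).

(* Bell measurement of every pair: outcome o has effect
   (x)_j 2^-n |Phi_(o j)><Phi_(o j)|. *)
Definition bell_povm (o : {ffun 'I_N -> plabel n}) (f g : pairs_basis n N) : C :=
  ((2 ^+ n) ^- N * bell_seq o f * bell_seq o g)%:C.

Lemma bell_povm_is_povm : is_povm bell_povm.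
Proof.
split=> [o v | f g].
  by rewrite quad_form_rank1 ler0c mulr_ge0 ?sqnormc_ge0 // invr_ge0 !exprn_ge0.
rewrite /bell_povm -(rmorph_nat (real_complex R)) -rmorph_sum; congr _%:C.
under eq_bigr do rewrite -mulrA.
rewrite -mulr_sumr.
under eq_bigr do rewrite /bell_seq -big_split /=.
rewrite -(bigA_distr_bigA (fun j y => bell y (f j) * bell y (g j))) /=.
under eq_bigr do rewrite sum_bell_mul.
rewrite big_split /= prodr_const card_ord -prodr_nat_eq mulrA mulVf ?mul1r //.
by rewrite expf_neq0 // expf_neq0 // pnatr_eq0.
Qed.

Lemma bell_amp_prod psi o :
  \sum_(g : pairs_basis n N) (bell_seq o g)%:C * pairs_state psi g
    = \prod_j bell_amp psi (o j).
Proof.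
rewrite /bell_amp bigA_distr_bigA /=; apply: eq_bigr => g _.
by rewrite /bell_seq /pairs_state rmorph_prod -big_split.
Qed.

Lemma povm_prob_bell psi o :
  povm_prob bell_povm (pairs_state psi) o = (iid_prob (bell_prob psi) o)%:C.
Proof.
rewrite /povm_prob quad_form_rank1 bell_amp_prod sqnormc_prod; congr _%:C.
by rewrite /iid_prob /bell_prob big_split /= prodr_const card_ord exprVn.
Qed.

Definition marginal_estimate (o : {ffun 'I_N -> plabel n}) (k : 'I_n.+1)
    (z : {ffun 'I_k -> bool * bool}) : R :=
  sample_mean (marginal_score z) o.

Definition estimate_fails psi eps (k : 'I_n.+1) (z : {ffun 'I_k -> bool * bool})
    (o : {ffun 'I_N -> plabel n}) : bool :=
  eps / 2 ^+ k < `|marginal_estimate o z - expect (bell_prob psi) (marginal_score z)|.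

Lemma estimate_fails_prob_le psi eps (k : 'I_n.+1) (z : {ffun 'I_k -> bool * bool}) :
  is_pure_state psi -> 0 < eps <= 2 -> (0 < N)%N ->
  \sum_(o | estimate_fails psi eps z o) iid_prob (bell_prob psi) o
    <= 2 * expR (- (N%:R * eps ^+ 2 / 32)).
Proof.
move=> psi_pure eps_range N_gt0; apply: hoeffding_sample_mean => //.
- exact: bell_prob_ge0.
- exact: sum_bell_prob.
- by rewrite invr_gt0 exprn_gt0.
- exact: marginal_score_bound.
Qed.

Lemma estimate_fails_prob_eq0 psi eps (k : 'I_n.+1) (z : {ffun 'I_k -> bool * bool}) :
  is_pure_state psi -> 2 <= eps ->
  \sum_(o | estimate_fails psi eps z o) iid_prob (bell_prob psi) o = 0.
Proof.
move=> psi_pure eps_ge2; rewrite big_pred0 // => o; apply/negbTE; rewrite -leNgt.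
have score_le := marginal_score_bound z.
apply: le_trans (sample_mean_dev_le (bell_prob_ge0 psi) (sum_bell_prob psi_pure) o _ score_le) _.
  by rewrite invr_ge0 exprn_ge0.
by rewrite ler_wpM2r ?invr_ge0 ?exprn_ge0.
Qed.

Lemma bell_sampling_correct psi eps B : is_pure_state psi ->
  (forall (k : 'I_n.+1) (z : {ffun 'I_k -> bool * bool}),
     \sum_(o | estimate_fails psi eps z o) iid_prob (bell_prob psi) o <= B) ->
  (1 - B *+ (4 ^ n * n.+1))%:C <=
    \sum_(o : {ffun 'I_N -> plabel n} | [forall x : plabel n, forall k : 'I_n.+1, (0 < k)%N ==>
          (`|marginal_estimate o (pauli_prefix k x) - pauli_marginal psi k x| <= eps / 2 ^+ k)])
      povm_prob bell_povm (pairs_state psi) o.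
Proof.
move=> psi_pure fails_le.
rewrite (eq_bigr _ (fun o _ => povm_prob_bell psi o)) -rmorph_sum lecR.
apply: sum_pred_ge_compl; first by apply: sum_iid_prob; apply: sum_bell_prob.
pose fails (e : plabel n * 'I_n.+1) := estimate_fails psi eps (pauli_prefix e.2 e.1).
apply: le_trans (union_bound (B := fails) (iid_prob_ge0 (bell_prob_ge0 psi) (N := N)) _) _.
  move=> o /forallPn [x /forallPn [k]]; rewrite negb_imply -ltNge pauli_marginal_expect.
  by case/andP => _ fails_o; exists (x, k).
have -> : B *+ (4 ^ n * n.+1) = \sum_(e : plabel n * 'I_n.+1) B.
  by rewrite sumr_const card_prod card_ffun !card_ord card_prod card_bool.
by apply: ler_sum => -[x k] _; apply: fails_le.
Qed.

End BellSampling.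

Lemma ln_inv_ge_half (R : realType) (delta : R) :
  0 < delta -> delta <= 1 / 2 -> 1 / 2 <= ln delta^-1.
Proof.
move=> delta_gt0 delta_le.
have two_le : 2 <= delta^-1.
  by rewrite -[2](invrK 2) lef_pV2 ?posrE ?invr_gt0 // -div1r.
have : expR (1 / 2) <= delta^-1 :> R.
  apply: le_trans (expR_le_quadratic (lexx _)) (le_trans _ two_le).
  by rewrite (_ : 1 + 1 / 2 + 2 * (1 / 2) ^+ 2 = 2 :> R) //; field.
by rewrite -ler_ln ?posrE ?expR_gt0 ?invr_gt0 // expRK.
Qed.

Lemma four_pow_mul_le (n : nat) : (0 < n)%N -> (2 * (4 ^ n * n.+1) <= 2 ^ (5 * n - 1))%N.
Proof.
case: n => // m _; elim: m => [// | m IH].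
have -> : (5 * m.+2 - 1 = (5 * m.+1 - 1) + 5)%N by lia.
rewrite expnD (expnS 4 m.+1) (_ : 2 ^ 5 = 32)%N //.
have : (m.+3 <= 2 * m.+2)%N by lia.
nia.
Qed.

Lemma hoeffding_union_le (R : realType) (n N : nat) (delta eps : R) :
  (0 < n)%N -> 0 < delta -> delta <= 1 / 2 -> 0 < eps ->
  160 * n%:R * ln delta^-1 / eps ^+ 2 <= N%:R ->
  (2 * expR (- (N%:R * eps ^+ 2 / 32))) *+ (4 ^ n * n.+1) <= delta.
Proof.
move=> n_gt0 delta_gt0 delta_le eps_gt0 N_ge.
(* 160 = 32 * 5: each failure probability is at most 2 delta ^+ (5 n), and
   2 4^n (n + 1) <= 2 ^ (5 n - 1) <= delta ^- (5 n - 1). *)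
have eps2_gt0 : 0 < eps ^+ 2 by rewrite exprn_gt0.
have exp_le : expR (- (N%:R * eps ^+ 2 / 32)) <= delta ^+ (5 * n).
  have -> : delta ^+ (5 * n) = expR (- ((5 * n)%:R * ln delta^-1)).
    by rewrite -mulrN expRM_natl lnV ?posrE // opprK lnK.
  rewrite ler_expR lerN2 natrM ler_pdivlMr //.
  by rewrite (_ : _ * 32 = 160 * n%:R * ln delta^-1) -?ler_pdivrMr //; ring.
pose p := (5 * n - 1)%N.
have pow_le : delta ^+ p <= (2 ^+ p)^-1.
  by rewrite -exprVn lerXn2r ?nnegrE ?invr_ge0 ?(ltW delta_gt0) // -div1r.
apply: (@le_trans _ _ ((2 * delta ^+ (5 * n)) *+ (4 ^ n * n.+1))).
  by rewrite lerMn2r ler_wpM2l ?orbT.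
rewrite -mulr_natr (_ : (5 * n = p.+1)%N); last by rewrite /p; lia.
rewrite exprS (mulrCA 2) -mulrA; apply: ler_piMr; first exact: ltW.
apply: (@le_trans _ _ (2 * (2 ^+ p)^-1 * (4 ^ n * n.+1)%:R)).
  by rewrite ler_wpM2r // ler_wpM2l.
rewrite mulrAC ler_pdivrMr ?exprn_gt0 // mul1r -natrX -natrM ler_nat.
exact: four_pow_mul_le.
Qed.

Lemma sample_size_le (R : realType) (n : nat) (L eps : R) :
  (0 < n)%N -> 1 / 2 <= L -> 0 < eps < 2 ->
  (Num.truncn (160 * n%:R * L / eps ^+ 2)).+1%:R <= 168 * n%:R * L / eps ^+ 2.
Proof.
move=> n_gt0 L_ge /andP[eps_gt0 eps_lt2].
have eps2_gt0 : 0 < eps ^+ 2 by rewrite exprn_gt0.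
have n_ge1 : 1 <= n%:R :> R by rewrite ler1n.
set x := 160 * n%:R * L / eps ^+ 2.
have x_ge0 : 0 <= x by rewrite divr_ge0 ?sqr_ge0 // !mulr_ge0 ?ler0n //; lra.
have /andP[trunc_le _] := truncn_itv x_ge0.
(* 168 = 160 + 8: the extra term pays for rounding up. *)
have one_le : 1 <= 8 * n%:R * L / eps ^+ 2.
  rewrite ler_pdivlMr // mul1r; have : 1 / 2 <= n%:R * L by nra.
  nra.
rewrite -addn1 natrD (_ : 168 * n%:R * L / eps ^+ 2 = x + 8 * n%:R * L / eps ^+ 2).
  exact: lerD.
by rewrite /x; field; rewrite gt_eqF.
Qed.

Theorem lemma12 (R : realType) :
  exists Cst : R, 0 < Cst /\
  forall (n : nat) (eps delta : R),
    (0 < n)%N -> 0 < eps -> 0 < delta -> delta <= 1 / 2 ->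
    exists N : nat,
      N%:R <= Cst * n%:R * ln (delta^-1) / eps ^+ 2 /\
      exists (O : finType)
             (M : O -> pairs_basis n N -> pairs_basis n N -> R[i])
             (est : O -> forall k : 'I_n.+1, {ffun 'I_k -> bool * bool} -> R),
        is_povm M /\
        forall psi : qbasis n -> R[i], is_pure_state psi ->
          (1 - delta)%:C <=
            \sum_(o : O | [forall x : plabel n, forall k : 'I_n.+1,
                     (0 < k)%N ==>
                     (`|est o k (pauli_prefix k x) - pauli_marginal psi k x|
                        <= eps / 2 ^+ (nat_of_ord k))])
              povm_prob M (pairs_state (N := N) psi) o.
Proof.
exists 168; split => // n eps delta n_gt0 eps_gt0 delta_gt0 delta_le.
have L_ge := ln_inv_ge_half delta_gt0 delta_le.
have [eps_lt2 | eps_ge2] := ltP eps 2.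
- pose N := (Num.truncn (160 * n%:R * ln delta^-1 / eps ^+ 2)).+1.
  exists N; split; first by apply: sample_size_le; rewrite ?eps_gt0.
  exists _, (@bell_povm R n N), (@marginal_estimate R n N).
  split=> [|psi psi_pure]; first exact: bell_povm_is_povm.
  apply: le_trans (bell_sampling_correct psi_pure _); last first.
    by move=> k z; apply: estimate_fails_prob_le; rewrite ?eps_gt0 ?ltW.
  rewrite lecR lerD2l lerN2; apply: hoeffding_union_le => //.
  exact: ltW (truncnS_gt _).
- exists 0%N; split; first by rewrite divr_ge0 ?sqr_ge0 // !mulr_ge0 ?ler0n //; lra.
  exists _, (@bell_povm R n 0), (@marginal_estimate R n 0).
  split=> [|psi psi_pure]; first exact: bell_povm_is_povm.
  apply: le_trans (bell_sampling_correct (B := 0) psi_pure _).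
    by rewrite mul0rn subr0 lecR; lra.
  by move=> k z; rewrite estimate_fails_prob_eq0.
Qed.
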